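(* Let $e\geq 2$ and $N=\langle\sigma\rangle$ cyclic of order $2^e$. Every transitive subgroup $G$ of $\mathrm{Hol}(N)$ has an element of order $2^{e-1}$. Moreover, if $G$ has no element of order $2^e$, then $b-1\equiv 2v\pmod 4$ for all $[\sigma^v,\varphi_b]\in G$, and in particular $\mathrm{Stab}_G(1_N)\subseteq\langle\varphi_5\rangle$.
   Context: For an odd integer $a$, $\varphi_a\in\mathrm{Aut}(N)$ is $\sigma\mapsto\sigma^a$. Elements of $\mathrm{Hol}(N)=N\rtimes\mathrm{Aut}(N)$ are written $[\sigma^u,\varphi_a]$ with $[\sigma^u,\varphi_a][\sigma^v,\varphi_b]=[\sigma^{u+va},\varphi_{ab}]$. $\mathrm{Hol}(N)$ acts on $N$ by $[\sigma^u,\varphi_a]\cdot\sigma^v=\sigma^{u+av}$; a subgroup is transitive if it acts transitively on $N$; $\mathrm{Stab}_G(1_N)=G\cap\mathrm{Aut}(N)$. *)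

From mathcomp Require Import all_boot all_order all_algebra all_fingroup all_solvable.
Set Implicit Arguments. Unset Strict Implicit. Unset Printing Implicit Defensive.
Import GRing.Theory.

(* N = <sigma> cyclic of order 2^e is modelled as the additive group 'Z_(2^e)
   (sigma^u <-> u).  Hol(N) is realised as its (faithful) permutation
   representation on N: [sigma^u, phi_a] is the permutation x |-> u + a x
   (a odd), i.e. [sigma^u,phi_a] . sigma^v = sigma^(u + a v). *)

Definition ZN (e : nat) := 'Z_(2 ^ e).

Definition is_hol_elt (e : nat) (s : {perm ZN e}) (u a : ZN e) : Prop :=
  odd (val a) /\ forall x : ZN e, s x = (u + a * x)%R.

Definition Hol (e : nat) : {set {perm ZN e}} :=
  [set s : {perm ZN e} | [exists u : ZN e, exists a : ZN e,
      odd (val a) && [forall x : ZN e, s x == (u + a * x)%R]]].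

Definition is_phi (e : nat) (s : {perm ZN e}) (a : nat) : Prop :=
  forall x : ZN e, s x = (a%:R * x)%R.

From mathcomp Require Import all_boot all_order all_algebra all_fingroup all_solvable.
From mathcomp Require Import ring zify.
Set Implicit Arguments.
Unset Strict Implicit.
Unset Printing Implicit Defensive.

Import GRing.Theory.

(* Write elements of Hol(N) as x |-> u + a x.  If a = 1 mod 4 and u = 2^j m
   with m odd, then g^(2^k) is x |-> u_k + a^(2^k) x where u_k = 2^(j+k) m_k,
   m_k odd, and a^(2^k) = 1 mod 2^(k+2); so for j <= 2 the order of g is
   exactly 2^(e-j).  In particular u odd gives a 2^e-cycle.
   By transitivity G contains h with h(0) = 1, say x |-> 1 + c x.  If G has
   no element of order 2^e, then no element has u odd and a = 1 mod 4;
   applying this to h, to g and to g o h (whose shift is u + a and coefficient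
   a c) yields a - 1 = 2u mod 4 throughout G.  The element of G sending 0 to 2
   then has order 2^(e-1), and a stabiliser element x |-> a x has a = 1 mod 4,
   so a is a power of 5 by Hensel lifting. *)

Lemma exp2_gt1 e : 0 < e -> 1 < 2 ^ e.
Proof. by move=> e_gt0; rewrite -{1}(expn0 2) ltn_exp2l. Qed.

Lemma ZN_natr_eq0 e n : 0 < e -> ((n%:R : ZN e) == 0)%R = (2 ^ e %| n).
Proof. by move=> e_gt0; rewrite -val_eqE /= val_Zp_nat ?exp2_gt1. Qed.

Lemma expn_exp2_1mod4 A k : A %% 4 = 1 ->
  exists2 r, odd r = odd (A %/ 4) & A ^ (2 ^ k) = 1 + 2 ^ k.+2 * r.
Proof.
move=> A1; set q := A %/ 4; have defA : A = 1 + 4 * q by lia.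
elim: k => [|k [r odd_r IHk]]; first by exists q => //; rewrite defA.
exists (r + 2 ^ k.+1 * r ^ 2); first by rewrite oddD oddM oddX /= odd_r addbF.
by rewrite expnSr expnM IHk !expnS; ring.
Qed.

(* Natural-number parameters, so that 2-adic valuations are computed in [nat]. *)
Definition is_affine e (g : {perm ZN e}) (U A : nat) :=
  forall x : ZN e, g x = (U%:R + A%:R * x)%R.

Lemma is_affineM e (g h : {perm ZN e}) U A V B :
  is_affine g U A -> is_affine h V B -> is_affine (g * h) (V + B * U) (B * A).
Proof. by move=> gE hE x; rewrite permM gE hE !(natrD, natrM); ring. Qed.

Lemma is_affine_exp2 e (g : {perm ZN e}) j m A :
    odd m -> A %% 4 = 1 -> is_affine g (2 ^ j * m) A ->
  forall k, exists2 m', odd m' &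
    is_affine (g ^+ (2 ^ k)) (2 ^ (j + k) * m') (A ^ (2 ^ k)).
Proof.
move=> odd_m A1 gE; elim=> [|k [m' odd_m' gkE]].
  by exists m => //; rewrite addn0 expn0 expn1.
have [r _ defAk] := expn_exp2_1mod4 k A1.
exists (m' * (1 + 2 ^ k.+1 * r)); first by rewrite oddM odd_m' oddD oddM oddX.
have -> : A ^ 2 ^ k.+1 = A ^ 2 ^ k * A ^ 2 ^ k.
  by rewrite expnS mul2n -addnn expnD.
have -> : 2 ^ (j + k.+1) * (m' * (1 + 2 ^ k.+1 * r)) =
          2 ^ (j + k) * m' + A ^ 2 ^ k * (2 ^ (j + k) * m').
  by rewrite defAk addnS !expnS; ring.
by rewrite expnS mul2n -addnn expgD; apply: is_affineM.
Qed.

Lemma order_affine e (g : {perm ZN e}) j m A :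
    j <= 2 -> j < e -> odd m -> A %% 4 = 1 -> is_affine g (2 ^ j * m) A ->
  #[g]%g = 2 ^ (e - j).
Proof.
move=> j_le2 j_lt_e odd_m A1 gE; have e_gt0 : 0 < e by lia.
have [k def_e] : exists k, e = j + k.+1 by exists (e - j).-1; lia.
have [m1 odd_m1 g1E] := is_affine_exp2 odd_m A1 gE k.
have [m2 _ g2E] := is_affine_exp2 odd_m A1 gE k.+1.
have [r _ defA2] := expn_exp2_1mod4 k.+1 A1.
have -> : e - j = k.+1 by lia.
rewrite expnSr; apply: (@orderXpfactor _ 2 k 2) => //.
apply/eqP; rewrite eqn_leq order_gt1 dvdn_leq ?order_dvdn //=.
- apply: contraTneq isT => gk1; have := congr1 (fun s : {perm ZN e} => s 0%R) gk1.
  rewrite g1E perm1 mulr0 addr0 => /eqP; rewrite ZN_natr_eq0 // def_e addnS expnS.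
  by rewrite [2 * _]mulnC dvdn_pmul2l ?expn_gt0 // dvdn2 odd_m1.
- apply/eqP/permP => x; rewrite -expgM -expnSr g2E perm1 defA2.
  have /eqP-> : ((2 ^ (j + k.+1) * m2)%:R == 0 :> ZN e)%R.
    by rewrite ZN_natr_eq0 // def_e dvdn_mulr.
  rewrite natrD (eqP (_ : (2 ^ k.+3 * r)%:R == 0 :> ZN e)%R).
    by rewrite addr0 mul1r add0r.
  by rewrite ZN_natr_eq0 // dvdn_mulr // dvdn_exp2l; lia.
Qed.

Lemma ZN_1mod4_exp5 e A :
  2 <= e -> A %% 4 = 1 -> exists k, (A%:R = 5 ^+ k :> ZN e)%R.
Proof.
move=> e_ge2 A1; have e_gt0 : 0 < e by lia.
pose c : ZN e := (A %/ 4)%:R%R.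
have -> : (A%:R = 1 + 4 * c :> ZN e)%R.
  by rewrite {1}(divn_eq A 4) A1 natrD natrM addrC mulrC.
suff [k [r Er]] :
    exists k (r : ZN e), (5 ^+ k = 1 + 4 * c + 2 ^+ (e - 2).+2 * r)%R.
  exists k; rewrite Er (_ : (e - 2).+2 = e); last by lia.
  by rewrite -natrX pchar_Zp ?exp2_gt1 // mul0r addr0.
elim: (e - 2) => [|d [k [r Er]]]; first by exists 0, (- c)%R; rewrite expr0; ring.
have {}Er : (5 ^+ k = 1 + 4 * c
                    + 2 ^+ d.+2 * ((odd (val r))%:R + 2 * ((val r)./2)%:R))%R.
  by rewrite -natrM -natrD mul2n odd_double_half natr_Zp.
(* Hensel step: if 5^k = a + 2^(d+2) mod 2^(d+3), multiply by
   5^(2^d) = 1 + 2^(d+2) mod 2^(d+3); the error term becomes 2^(d+2) (a + 1),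
   and a + 1 = 2 mod 4. *)
move: ((val r)./2)%:R%R Er => s; case: (odd (val r)) => /= Er; last first.
  by exists k, s; rewrite Er add0r !exprS; ring.
have [w odd_w def5] := @expn_exp2_1mod4 5 d erefl.
rewrite -(odd_double_half w) odd_w -mul2n in def5.
exists (k + 2 ^ d), (1 + w./2%:R + 2 * c + 4 * c * w./2%:R + s
                     + 2 * 2 ^+ d * (1 + 2 * s) * (1 + 2 * w./2%:R))%R.
rewrite exprD Er -[(5 ^+ _)%R]natrX def5 !(natrD, natrM, natrX) !exprS /=; ring.
Qed.

Lemma Hol_is_affine e (g : {perm ZN e}) :
  g \in Hol e -> exists2 A, odd A & is_affine g (val (g 0%R)) A.
Proof.
rewrite inE => /existsP[u /existsP[a /andP[odd_a /forallP gE]]].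
exists (val a) => // x; rewrite !natr_Zp (eqP (gE x)) (eqP (gE 0%R)).
by rewrite mulr0 addr0.
Qed.

Lemma is_affine0_cycle_phi5 e (g : {perm ZN e}) A :
    2 <= e -> A %% 4 = 1 -> is_affine g 0 A ->
  exists2 f : {perm ZN e}, is_phi f 5 & g \in <[f]>%g.
Proof.
move=> e_ge2 A1 gE; have [k defA] := ZN_1mod4_exp5 e_ge2 A1.
have unit5 : (5%:R : ZN e)%R \is a GRing.unit.
  by rewrite unitZpE ?exp2_gt1 //; [apply: coprimeXl | lia].
exists (perm (mulrI unit5)) => [x|]; first by rewrite permE.
apply/cycleP; exists k; apply/permP => x; rewrite gE add0r defA permX {defA}.
by elim: k => [|k IHk] /=; rewrite ?expr0 ?mul1r // permE -IHk exprS mulrA.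
Qed.

Section TransitiveSubgroup.

Variables (e : nat) (G : {group {perm ZN e}}).
Hypotheses (e_ge2 : 2 <= e) (sGHol : G \subset Hol e).
Hypothesis trG : [transitive G, on [set: ZN e] | 'P].

Lemma transitive_is_affine U :
  U < 2 ^ e -> exists2 g, g \in G & exists2 A, odd A & is_affine g U A.
Proof.
move=> U_lt; have /orbitP[g gG g0] : (U%:R \in orbit 'P G 0)%R.
  by rewrite (atransP trG) ?inE.
exists g => //; have [A odd_A gE] := Hol_is_affine (subsetP sGHol g gG).
by exists A; rewrite // -(modn_small U_lt) -val_Zp_nat ?exp2_gt1 -?g0 //; lia.
Qed.

Hypothesis noCycle : ~ exists2 g, g \in G & #[g]%g = 2 ^ e.

Lemma is_affine_odd_3mod4 g U A :
  g \in G -> is_affine g U A -> odd U -> odd A -> A %% 4 = 3.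
Proof.
move=> gG gE odd_U odd_A; have: (A %% 4 = 1) \/ (A %% 4 = 3) by lia.
case=> // A1; case: noCycle; exists g => //.
have := @order_affine e g 0 U A; rewrite subn0 expn0 mul1n; apply=> //; lia.
Qed.

Lemma is_affine_mod4 g U A :
  g \in G -> is_affine g U A -> odd A -> A.-1 = 2 * U %[mod 4].
Proof.
move=> gG gE odd_A; have e_gt0 : 0 < e by lia.
have [h hG [C odd_C hE]] := transitive_is_affine (exp2_gt1 e_gt0).
have C3 := is_affine_odd_3mod4 hG hE isT odd_C.
case odd_U: (odd U); first by have := is_affine_odd_3mod4 gG gE odd_U odd_A; lia.
have := is_affine_odd_3mod4 (groupM hG gG) (is_affineM hE gE).
rewrite muln1 oddD odd_U odd_A oddM odd_A odd_C -modnMm C3 => /(_ isT isT).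
lia.
Qed.

End TransitiveSubgroup.

Theorem lemma5p1 (e : nat) (he : 2 <= e) (G : {group {perm ZN e}}) :
  G \subset Hol e ->
  [transitive G, on [set: ZN e] | 'P] ->
  (exists2 g, g \in G & #[g]%g = 2 ^ e.-1)
  /\
  (~ (exists2 g, g \in G & #[g]%g = 2 ^ e) ->
     (forall g, g \in G -> forall v b : ZN e, is_hol_elt g v b ->
        (val b).-1 = (2 * val v) %[mod 4])
     /\
     (forall g, g \in G -> g 0%R = 0%R ->
        exists2 f : {perm ZN e}, is_phi f 5 & g \in <[f]>%g)).
Proof.
move=> sGHol trG.
have [[g gG og] | noCycle] := @exists_inP _ (mem G) (fun g => #[g]%g == 2 ^ e).
  split=> [|[]]; last by exists g; last exact/eqP.
  by exists (g ^+ 2)%g; rewrite ?groupX // (orderXexp 1 (eqP og)) subn1.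
have {}noCycle : ~ exists2 g, g \in G & #[g]%g = 2 ^ e.
  by case=> g gG og; case: noCycle; exists g => //; apply/eqP.
have coef_mod4 := is_affine_mod4 he sGHol trG noCycle.
split=> [|_]; last split=> [g gG v b [odd_b gE] | g gG g0].
- have lt_2_2e : 2 < 2 ^ e by rewrite -[X in X < _](expn1 2) ltn_exp2l.
  have [g gG [A odd_A gE]] := transitive_is_affine he sGHol trG lt_2_2e.
  exists g => //; rewrite -subn1 (@order_affine _ _ 1 1 A) //; try lia.
  by have := coef_mod4 g _ _ gG gE odd_A; lia.
- by apply: (coef_mod4 g _ _ gG) => // x; rewrite gE !natr_Zp.
- have [A odd_A] := Hol_is_affine (subsetP sGHol g gG); rewrite g0 /= => gE.
  apply: (is_affine0_cycle_phi5 he _ gE).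
  by have := coef_mod4 g _ _ gG gE odd_A; lia.
Qed.
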